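(* Consider a hyperbolic triangle with vertices $v_i,v_j,v_k$, carrying circles of radii $r_i,r_j,r_k>0$ centered at the vertices, with inversive distances $a=I_{jk}$, $b=I_{ki}$, $c=I_{ij}$, all $>1$, so that the edge lengths are $l_{jk}=\operatorname{arccosh}(\cosh r_j\cosh r_k+a\sinh r_j\sinh r_k)$, etc. Suppose these three lengths satisfy the strict triangle inequalities and the orthogonal circle of the face is compact, with hyperbolic radius $\rho_{ijk}>0$. Then $\Xi_{ijk}>0$ and $$\sinh r_i\sinh r_j\sinh r_k\sqrt{\Delta_{abc}}=\tanh\rho_{ijk}\sqrt{1+2xyz-x^2-y^2-z^2}=\sinh\rho_{ijk}\sqrt{\Xi_{ijk}}.$$
   Context: Notation: $p=\cosh r_i$, $q=\cosh r_j$, $r=\cosh r_k$, $x=\cosh l_{jk}$, $y=\cosh l_{ki}$, $z=\cosh l_{ij}$. The discriminant of inversive distance is $\Delta_{abc}=a^2+b^2+c^2+2abc-1$. The discriminant of compactness is $$\Xi_{ijk}=p^2(1-x^2)+q^2(1-y^2)+r^2(1-z^2)+2pq(xy-z)+2pr(xz-y)+2qr(yz-x).$$ Orthogonal circle: embed the triangle isometrically in the Poincaré disk $\mathbb D\subset\mathbb R^2$; the three hyperbolic vertex circles become disjoint Euclidean circles, and the orthogonal circle is the unique Euclidean circle orthogonal to all three. It is called compact if it lies in the open disk $\mathbb D$; then it is a hyperbolic circle with center $O_{ijk}$ and hyperbolic radius $\rho_{ijk}$, satisfying $\cosh d(O_{ijk},v_\alpha)=\cosh r_\alpha\cosh\rho_{ijk}$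 for $\alpha=i,j,k$. *)

From Stdlib Require Import Reals.
Open Scope R_scope.

Record pt3 := Pt3 { c0 : R; c1 : R; c2 : R }.

Definition mink (u v : pt3) : R := c0 u * c0 v - c1 u * c1 v - c2 u * c2 v.

(* u lies on the upper sheet of the hyperboloid, i.e. is a point of H^2. *)
Definition in_H2 (u : pt3) : Prop := mink u u = 1 /\ 0 < c0 u.

Definition arcosh (t : R) : R := ln (t + sqrt (t * t - 1)).

(* hyperbolic distance in the hyperboloid model: cosh d(u,v) = <u,v> *)
Definition hdist (u v : pt3) : R := arcosh (mink u v).

(* discriminant of inversive distance (named Delta_id to avoid clash with Stdlib Delta) *)
Definition Delta_id (a b c : R) : R := a^2 + b^2 + c^2 + 2*a*b*c - 1.

(* discriminant of compactness, p q r = cosh radii, x y z = cosh edge lengths *)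
Definition Xi (p q r x y z : R) : R :=
  p^2*(1 - x^2) + q^2*(1 - y^2) + r^2*(1 - z^2)
  + 2*p*q*(x*y - z) + 2*p*r*(x*z - y) + 2*q*r*(y*z - x).

Definition orth_circle (O : pt3) (rho : R) (v : pt3) (rv : R) : Prop :=
  cosh (hdist O v) = cosh rv * cosh rho.

Definition compact_orthogonal_circle (vi vj vk : pt3) (ri rj rk : R)
    (O : pt3) (rho : R) : Prop :=
  in_H2 O /\ 0 < rho /\
  orth_circle O rho vi ri /\ orth_circle O rho vj rj /\ orth_circle O rho vk rk.

(* The Gram determinant of the four vectors O, v_i, v_j, v_k of R^{2,1} vanishes.  Expanded
   along O, whose Minkowski products with the vertices are cosh r_a cosh rho by orthogonality,
   this says Gram(v_i, v_j, v_k) = cosh^2 rho * Xi.  The strict triangle inequalities make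
   Gram(v_i, v_j, v_k) = 1 + 2xyz - x^2 - y^2 - z^2 positive, hence Xi > 0, and substituting
   the inversive-distance formulas for x, y, z gives Gram - Xi = (sinh r_i sinh r_j sinh r_k)^2 Delta.
   Both equalities then follow by taking square roots, since tanh^2 rho = 1 - 1/cosh^2 rho. *)

From Stdlib Require Import Reals Lra Psatz.
Open Scope R_scope.

Lemma cosh2_sinh2 t : cosh t ^ 2 - sinh t ^ 2 = 1.
Proof.
  unfold cosh, sinh; rewrite exp_Ropp.
  pose proof (exp_pos t); field; lra.
Qed.

Lemma cosh_plus u v : cosh (u + v) = cosh u * cosh v + sinh u * sinh v.
Proof. unfold cosh, sinh; rewrite Ropp_plus_distr, !exp_plus; field. Qed.

Lemma cosh_minus u v : cosh (u - v) = cosh u * cosh v - sinh u * sinh v.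
Proof.
  unfold Rminus; rewrite cosh_plus.
  unfold cosh, sinh; rewrite Ropp_involutive; field.
Qed.

Lemma cosh_pos t : 0 < cosh t.
Proof. unfold cosh; pose proof (exp_pos t); pose proof (exp_pos (- t)); lra. Qed.

Lemma cosh_ge1 t : 1 <= cosh t.
Proof. pose proof (cosh2_sinh2 t); pose proof (cosh_pos t); nra. Qed.

Lemma sinh_pos t : 0 < t -> 0 < sinh t.
Proof. intro ht; rewrite <- sinh_0; now apply sinh_lt. Qed.

Lemma cosh_lt_cosh u v : 0 < v + u -> 0 < v - u -> cosh u < cosh v.
Proof.
  intros hp hm.
  assert (diff : cosh v - cosh u = 2 * sinh ((v + u) / 2) * sinh ((v - u) / 2)).
  { replace v with ((v + u) / 2 + (v - u) / 2) at 1 by field.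
    replace u with ((v + u) / 2 - (v - u) / 2) at 3 by field.
    rewrite cosh_plus, cosh_minus; ring. }
  pose proof (sinh_pos ((v + u) / 2) ltac:(lra)).
  pose proof (sinh_pos ((v - u) / 2) ltac:(lra)).
  nra.
Qed.

Lemma cosh_arcosh t : 1 <= t -> cosh (arcosh t) = t.
Proof.
  intro ht; unfold arcosh, cosh.
  set (s := sqrt (t * t - 1)).
  assert (s_nonneg : 0 <= s) by apply sqrt_pos.
  assert (s_sq : s * s = t * t - 1) by (apply sqrt_sqrt; nra).
  rewrite exp_Ropp, exp_ln by lra.
  replace (/ (t + s)) with (t - s) by (field_simplify_eq; nra).
  field.
Qed.

Lemma inversive_edge_ge1 r1 r2 a : 0 < r1 -> 0 < r2 -> -1 <= a ->
  1 <= cosh r1 * cosh r2 + a * sinh r1 * sinh r2.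
Proof.
  intros h1 h2 ha.
  pose proof (cosh_ge1 (r1 - r2)); rewrite cosh_minus in *.
  pose proof (Rmult_lt_0_compat _ _ (sinh_pos r1 h1) (sinh_pos r2 h2)).
  nra.
Qed.

(* The Gram determinant of three unit vectors with pairwise products x, y, z. *)
Definition gram3 (x y z : R) : R := 1 + 2 * x * y * z - x ^ 2 - y ^ 2 - z ^ 2.

Lemma gram3_cosh_triangle_pos l1 l2 l3 :
  l1 < l2 + l3 -> l2 < l3 + l1 -> l3 < l1 + l2 ->
  0 < gram3 (cosh l1) (cosh l2) (cosh l3).
Proof.
  intros t1 t2 t3.
  assert (upper : cosh l3 < cosh (l1 + l2)) by (apply cosh_lt_cosh; lra).
  assert (lower : cosh (l1 - l2) < cosh l3) by (apply cosh_lt_cosh; lra).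
  rewrite cosh_plus in upper; rewrite cosh_minus in lower.
  assert (factor : gram3 (cosh l1) (cosh l2) (cosh l3)
    = (cosh l1 * cosh l2 + sinh l1 * sinh l2 - cosh l3)
      * (cosh l3 - (cosh l1 * cosh l2 - sinh l1 * sinh l2))).
  { unfold gram3; pose proof (cosh2_sinh2 l1); pose proof (cosh2_sinh2 l2); nra. }
  rewrite factor; apply Rmult_lt_0_compat; lra.
Qed.

Lemma mink_sym u v : mink u v = mink v u.
Proof. unfold mink; ring. Qed.

Lemma mink_H2_ge1 u v : in_H2 u -> in_H2 v -> 1 <= mink u v.
Proof.
  destruct u as [u0 u1 u2], v as [v0 v1 v2]; unfold in_H2, mink; simpl.
  intros [hu pu] [hv pv].
  assert (prod : (u0 * v0) ^ 2 = (1 + (u1 * u1 + u2 * u2)) * (1 + (v1 * v1 + v2 * v2))).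
  { replace ((u0 * v0) ^ 2) with ((u0 * u0) * (v0 * v0)) by ring; f_equal; lra. }
  assert (reverse_cs : (1 + (u1 * v1 + u2 * v2)) ^ 2 <= (u0 * v0) ^ 2).
  { rewrite prod.
    pose proof (pow2_ge_0 (u1 - v1)); pose proof (pow2_ge_0 (u2 - v2)).
    pose proof (pow2_ge_0 (u1 * v2 - u2 * v1)).
    nra. }
  pose proof (Rmult_lt_0_compat _ _ pu pv).
  destruct (Rle_or_lt (1 + (u1 * v1 + u2 * v2)) (u0 * v0)); nra.
Qed.

Lemma cosh_hdist u v : in_H2 u -> in_H2 v -> cosh (hdist u v) = mink u v.
Proof. intros hu hv; apply cosh_arcosh, mink_H2_ge1; assumption. Qed.

(* Four vectors of R^3 have a singular Gram matrix; this is its determinant expanded along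
   the row and column of O. *)
Lemma mink_gram4_det (O u v w : pt3) :
  let g00 := mink O O in
  let b1 := mink O u in let b2 := mink O v in let b3 := mink O w in
  let guu := mink u u in let gvv := mink v v in let gww := mink w w in
  let guv := mink u v in let gvw := mink v w in let guw := mink u w in
  g00 * (guu*gvv*gww + 2*guv*gvw*guw - guu*gvw^2 - gvv*guw^2 - gww*guv^2)
  - (b1^2*(gvv*gww - gvw^2) + b2^2*(guu*gww - guw^2) + b3^2*(guu*gvv - guv^2)
     + 2*b1*b2*(guw*gvw - guv*gww) + 2*b1*b3*(guv*gvw - gvv*guw)
     + 2*b2*b3*(guv*guw - guu*gvw)) = 0.
Proof. destruct O, u, v, w; unfold mink; simpl; ring. Qed.

Lemma gram3_orthogonal_circle (O u v w : pt3) (ru rv rw rho : R) :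
  in_H2 O -> in_H2 u -> in_H2 v -> in_H2 w ->
  orth_circle O rho u ru -> orth_circle O rho v rv -> orth_circle O rho w rw ->
  let x := cosh (hdist v w) in let y := cosh (hdist w u) in let z := cosh (hdist u v) in
  gram3 x y z = cosh rho ^ 2 * Xi (cosh ru) (cosh rv) (cosh rw) x y z.
Proof.
  intros hO hu hv hw ou ov ow x y z.
  unfold orth_circle in ou, ov, ow; rewrite cosh_hdist in ou, ov, ow by assumption.
  unfold x, y, z; rewrite !cosh_hdist by assumption; rewrite (mink_sym w u).
  pose proof (mink_gram4_det O u v w) as det; cbv zeta in det.
  rewrite ou, ov, ow, (proj1 hO), (proj1 hu), (proj1 hv), (proj1 hw) in det.
  unfold gram3, Xi; lra.
Qed.

Lemma gram3_sub_Xi (ri rj rk a b c : R) :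
  let p := cosh ri in let q := cosh rj in let r := cosh rk in
  let x := q * r + a * sinh rj * sinh rk in
  let y := r * p + b * sinh rk * sinh ri in
  let z := p * q + c * sinh ri * sinh rj in
  gram3 x y z - Xi p q r x y z = (sinh ri * sinh rj * sinh rk) ^ 2 * Delta_id a b c.
Proof.
  cbv zeta; unfold gram3, Xi, Delta_id, cosh, sinh; rewrite !exp_Ropp.
  pose proof (exp_pos ri); pose proof (exp_pos rj); pose proof (exp_pos rk).
  field; repeat split; lra.
Qed.

Lemma tanh_sq_mul_cosh_sq t X : tanh t ^ 2 * (cosh t ^ 2 * X) = sinh t ^ 2 * X.
Proof. unfold tanh; pose proof (cosh_pos t); field; lra. Qed.

Lemma mul_sqrt_eq A B U V : 0 < A -> 0 <= B -> 0 <= V ->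
  A ^ 2 * U = B ^ 2 * V -> A * sqrt U = B * sqrt V.
Proof.
  intros hA hB hV e.
  assert (hU : 0 <= U).
  { pose proof (pow_lt A 2 hA); pose proof (Rmult_le_pos _ _ (pow2_ge_0 B) hV); nra. }
  rewrite <- (sqrt_pow2 A), <- (sqrt_pow2 B), <- !sqrt_mult_alt by (lra || apply pow2_ge_0).
  now rewrite e.
Qed.

Theorem mainTheorem2 (vi vj vk : pt3) (ri rj rk a b c : R) (O : pt3) (rho : R) :
  in_H2 vi -> in_H2 vj -> in_H2 vk ->
  0 < ri -> 0 < rj -> 0 < rk ->
  1 < a -> 1 < b -> 1 < c ->
  hdist vj vk = arcosh (cosh rj * cosh rk + a * sinh rj * sinh rk) ->
  hdist vk vi = arcosh (cosh rk * cosh ri + b * sinh rk * sinh ri) ->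
  hdist vi vj = arcosh (cosh ri * cosh rj + c * sinh ri * sinh rj) ->
  hdist vj vk < hdist vk vi + hdist vi vj ->
  hdist vk vi < hdist vi vj + hdist vj vk ->
  hdist vi vj < hdist vj vk + hdist vk vi ->
  compact_orthogonal_circle vi vj vk ri rj rk O rho ->
  let p := cosh ri in let q := cosh rj in let r := cosh rk in
  let x := cosh (hdist vj vk) in let y := cosh (hdist vk vi) in
  let z := cosh (hdist vi vj) in
  0 < Xi p q r x y z /\
  sinh ri * sinh rj * sinh rk * sqrt (Delta_id a b c)
    = tanh rho * sqrt (1 + 2*x*y*z - x^2 - y^2 - z^2) /\
  tanh rho * sqrt (1 + 2*x*y*z - x^2 - y^2 - z^2)
    = sinh rho * sqrt (Xi p q r x y z).
Proof.
  intros hi hj hk ri0 rj0 rk0 a1 b1 c1 ex ey ez t1 t2 t3 [hO [rho0 [oi [oj ok]]]]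
    p q r x y z.
  fold (gram3 x y z).
  assert (gram : gram3 x y z = cosh rho ^ 2 * Xi p q r x y z)
    by now apply (gram3_orthogonal_circle O).
  assert (gram_pos : 0 < gram3 x y z) by now apply gram3_cosh_triangle_pos.
  assert (Xi_pos : 0 < Xi p q r x y z) by (pose proof (cosh_pos rho); nra).
  assert (hx : x = q * r + a * sinh rj * sinh rk)
    by (unfold x; rewrite ex; apply cosh_arcosh, inversive_edge_ge1; lra).
  assert (hy : y = r * p + b * sinh rk * sinh ri)
    by (unfold y; rewrite ey; apply cosh_arcosh, inversive_edge_ge1; lra).
  assert (hz : z = p * q + c * sinh ri * sinh rj)
    by (unfold z; rewrite ez; apply cosh_arcosh, inversive_edge_ge1; lra).
  assert (delta : gram3 x y z - Xi p q r x y z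
                  = (sinh ri * sinh rj * sinh rk) ^ 2 * Delta_id a b c)
    by (rewrite hx, hy, hz; apply gram3_sub_Xi).
  assert (tanh_pos : 0 < tanh rho)
    by (apply Rdiv_lt_0_compat; [apply sinh_pos | apply cosh_pos]; lra).
  pose proof (sinh_pos rho rho0); pose proof (cosh2_sinh2 rho).
  split; [exact Xi_pos | split]; apply mul_sqrt_eq; try lra.
  - pose proof (sinh_pos ri ri0); pose proof (sinh_pos rj rj0); pose proof (sinh_pos rk rk0).
    apply Rmult_lt_0_compat; [apply Rmult_lt_0_compat |]; assumption.
  - rewrite <- delta, gram, tanh_sq_mul_cosh_sq.
    replace (cosh rho ^ 2) with (1 + sinh rho ^ 2) by lra; ring.
  - rewrite gram; apply tanh_sq_mul_cosh_sq.
Qed.
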